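(* On the hard instance $G_{k,m}$ described in the context, for all sufficiently large $k$ (independently of $m$), running Water-Filling yields $x_{u_{t,i}}=1$ immediately after the deadline of $u_{t,i}$, for every $t\in[m-1]$ and $i\in[k]$.
   Context: Fully online fractional matching model: an undirected graph is revealed online; each step is the arrival or the deadline of a vertex; at arrival, edges to previously arrived vertices are revealed; every neighbor of $v$ arrives before $v$'s deadline. The algorithm maintains $x_{uv}\ge 0$ with water-level $x_w:=\sum_{z}x_{wz}\le1$; $x_{uv}$ (with $u$ having the earlier deadline) may only be increased at $u$'s deadline. Water-Filling: at the deadline of $u$, with $N(u)$ the neighbors of $u$ whose deadlines have not been reached, while $x_u<1$ and $\min_{v\in N(u)}x_v<1$, continuously increase $x_{uv}$ at equal rates for all $v\in\arg\min_{v\in N(u)}x_v$. Let $c=2-\sqrt2$, $f(x)=\tfrac12(\ln(1-x)+\ln(1-c+x))+\frac{1}{\sqrt2(x-1)}+\frac{2+\sqrt2-\ln(1-c)}{2}$ on $[0,c]$ (a strictly decreasing bijection onto $[0,1]$), and $h(x)=f(c-f^{-1}(x))$ for $x\in[0,1]$. Hard instance $G_{k,m}$: vertex set $\bigcup_{t\in[m]}(U_t\cup V_t)$ with $U_t=\{u_{t,1},\dots,u_{t,k}\}$, $V_t=\{v_{t,1},\dots,v_{t,k}\}$. Edges: $(u_{t,i},v_{t,j})$ for all $t\in[m]$, $i\in[k]$, $j\ge i$; and $(u_{t,i},u_{t+1,j})$ for all $t\in[m-1]$, $i\in[k]$, $1\le j\le\lfloor k\,h(\tfrac{i-1}{k})\rfloor$.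 All vertices arrive before any deadline. The deadlines of the $u$-vertices come first, in lexicographic order of $(t,i)$; afterwards the deadlines of all $v$-vertices are reached (in any order). *)

From Stdlib Require Import Reals Lra Lia List Arith ZArith Bool ClassicalEpsilon.
Open Scope bool_scope.
Import ListNotations.
Open Scope R_scope.
Open Scope bool_scope.

Definition c_const : R := 2 - sqrt 2.

Definition f_fun (x : R) : R :=
  / 2 * (ln (1 - x) + ln (1 - c_const + x))
  + / (sqrt 2 * (x - 1))
  + (2 + sqrt 2 - ln (1 - c_const)) / 2.

(* f^{-1} on [0,1]: the (unique, f being a strictly decreasing bijection
   [0,c] -> [0,1]) x in [0,c] with f x = y. *)
Definition f_inv (y : R) : R :=
  epsilon (inhabits 0) (fun x => 0 <= x <= c_const /\ f_fun x = y).

Definition h_fun (x : R) : R := f_fun (c_const - f_inv x).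

Definition floor_nat (r : R) : nat := Z.to_nat (Int_part r).

(* All vertices arrive before any deadline, so only the deadline events
   matter.  State = water levels x_w of all vertices. *)

Section WF.
Context {V : Type} (eqdec : forall x y : V, {x = y} + {x <> y}).

Definition inb (v : V) (l : list V) : bool :=
  existsb (fun w => if eqdec v w then true else false) l.

Definition open_nbrs (verts : list V) (adj : V -> V -> bool)
  (done : list V) (u : V) : list V :=
  filter (fun v => adj u v && negb (inb v done)) verts.

Definition sumR (l : list R) : R := fold_right Rplus 0 l.

(* One Water-Filling deadline step at u with open neighbour list N:
   neighbour levels are raised (at equal rates on the current minima) to a
   common water level [lvl] <= 1, the amount added is added to x_u, and the
   process stops exactly when x_u = 1 or all neighbours are full. *)
Definition wf_step (N : list V) (u : V) (L L' : V -> R) : Prop :=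
  exists lvl : R,
    lvl <= 1 /\
    (forall v, In v N -> L' v = Rmax (L v) lvl) /\
    (forall w, w <> u -> ~ In w N -> L' w = L w) /\
    L' u = L u + sumR (map (fun v => L' v - L v) N) /\
    L' u <= 1 /\
    (L' u = 1 \/ forall v, In v N -> L' v = 1).

Inductive wf_run (verts : list V) (adj : V -> V -> bool)
  : list V -> (V -> R) -> list V -> (V -> R) -> Prop :=
| wf_run_nil : forall done L, wf_run verts adj done L [] L
| wf_run_cons : forall done L u rest L1 L2,
    wf_step (open_nbrs verts adj done u) u L L1 ->
    wf_run verts adj (u :: done) L1 rest L2 ->
    wf_run verts adj done L (u :: rest) L2.
End WF.

Inductive gvert : Type :=
| GU (t i : nat)
| GV (t j : nat).

Definition gvert_eqdec : forall x y : gvert, {x = y} + {x <> y}.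
Proof. decide equality; apply Nat.eq_dec. Defined.

Definition hcount (k i : nat) : nat :=
  floor_nat (INR k * h_fun (INR (i - 1) / INR k)).

Definition G_verts (k m : nat) : list gvert :=
  flat_map (fun t => map (GU t) (seq 1 k)) (seq 1 m) ++
  flat_map (fun t => map (GV t) (seq 1 k)) (seq 1 m).

Definition idx_ok (k m t i : nat) : bool :=
  (1 <=? t)%nat && (t <=? m)%nat && (1 <=? i)%nat && (i <=? k)%nat.

Definition G_edge_dir (k m : nat) (a b : gvert) : bool :=
  match a, b with
  | GU t i, GV t' j =>
      idx_ok k m t i && idx_ok k m t' j && (t =? t')%nat && (i <=? j)%nat
  | GU t i, GU t' j =>
      idx_ok k m t i && idx_ok k m t' j && (t' =? t + 1)%nat
      && (j <=? hcount k i)%nat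
  | _, _ => false
  end.

Definition G_adj (k m : nat) (a b : gvert) : bool :=
  G_edge_dir k m a b || G_edge_dir k m b a.

(* deadline order: u-vertices in lexicographic order of (t,i), then the
   v-vertices (their order is irrelevant; we fix lexicographic order). *)
Definition G_deadlines (k m : nat) : list gvert :=
  flat_map (fun t => map (GU t) (seq 1 k)) (seq 1 m) ++
  flat_map (fun t => map (GV t) (seq 1 k)) (seq 1 m).

(** Call layer [t] the vertices of [V_t] and [U_(t+1)]: these are the neighbours of [U_t] whose
    deadlines are still open when the deadlines of [U_t] are reached. Put
    [y_i = f^-1((i-1)/k)], so that [c = y_1 > y_2 > ... > y_(k+1) = 0], and
    [Phi(y) = ln((1-y)/(1-c)) + 0.06 (c - y) <= 0.96]. The invariant is that when the deadline
    of [u_(t,i)] is reached, every vertex of layer [t] holds at most [Phi(y_i)] and later layers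
    are empty. At that moment [u_(t,i)] has at least [n = k - i + 1 + floor(k h((i-1)/k))]
    open neighbours in layer [t]. Filling all of them would take [n (1 - Phi(y_i)) > 1] units,
    so water-filling stops because [x_(u_(t,i)) = 1]; and the common level it reaches is at most
    [Phi(y_i) + 1/n <= Phi(y_(i+1))], which preserves the invariant. This last inequality is
    what [f] is designed for: [n/k] is about [1 - f(y_i) + f(c - y_i) = -f'(y_i) (1 - y_i)]
    and [y_i - y_(i+1)] is about [-1/(k f'(y_i))], so [1/n] is about the increment of
    [-ln(1 - y)] between [y_(i+1)] and [y_i]; the linear term of [Phi] absorbs the
    discretisation error once [k] is large. *)

From Stdlib Require Import Reals Lra Lia ZArith List Bool ClassicalEpsilon.
From Coquelicot Require Import Coquelicot.
Import ListNotations.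
Open Scope R_scope.

Lemma sqrt2_bounds : 1.4142 < sqrt 2 < 1.4143.
Proof.
  split; apply Rsqr_incrst_0; rewrite ?Rsqr_sqrt; unfold Rsqr; try lra; apply sqrt_pos.
Qed.

Lemma c_bounds : 0.5857 < c_const < 0.5858.
Proof. pose proof sqrt2_bounds; unfold c_const; lra. Qed.

Definition f_slope (y : R) : R :=
  / (2 * (1 - y)) - / (2 * (1 - c_const + y)) + / (sqrt 2 * (1 - y) ^ 2).

Lemma f_derivative y : 0 <= y <= c_const -> derivable_pt_lim f_fun y (- f_slope y).
Proof.
  intros Hy; pose proof c_bounds; pose proof sqrt2_bounds.
  apply is_derive_Reals; unfold f_fun; auto_derive.
  - repeat split; try lra; apply Rmult_integral_contrapositive_currified; lra.
  - unfold f_slope; field; lra.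
Qed.

Lemma f_slope_0 : f_slope 0 = 0.
Proof.
  pose proof sqrt2_bounds; pose proof (sqrt_sqrt 2 ltac:(lra)).
  unfold f_slope, c_const; field_simplify; try (split; nra).
  replace (sqrt 2 ^ 2) with 2 by (simpl; lra); unfold Rdiv; ring.
Qed.

Lemma f_slope_mono a b : 0 <= a -> a <= b -> b <= c_const -> f_slope a <= f_slope b.
Proof.
  intros Ha Hab Hb; pose proof c_bounds; pose proof sqrt2_bounds; unfold f_slope.
  assert (/ (2 * (1 - a)) <= / (2 * (1 - b))) by (apply Rinv_le_contravar; lra).
  assert (/ (2 * (1 - c_const + b)) <= / (2 * (1 - c_const + a)))
    by (apply Rinv_le_contravar; lra).
  assert (/ (sqrt 2 * (1 - a) ^ 2) <= / (sqrt 2 * (1 - b) ^ 2)).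
  { apply Rinv_le_contravar; [apply Rmult_lt_0_compat; [lra | apply pow_lt; lra]|].
    apply Rmult_le_compat_l; [lra | apply pow_incr; lra]. }
  lra.
Qed.

Lemma f_slope_ge s : 0 <= s <= c_const -> 2 * s <= f_slope s.
Proof.
  intros Hs; pose proof c_bounds; pose proof sqrt2_bounds.
  pose proof (sqrt_sqrt 2 ltac:(lra)); pose proof f_slope_0 as Hq0; unfold f_slope in *.
  assert (E1 : / (2 * (1 - s)) - / (2 * (1 - 0)) = s / (2 * (1 - s))) by (field; lra).
  assert (E2 : / (2 * (1 - c_const + 0)) - / (2 * (1 - c_const + s))
               = s / (2 * (1 - c_const) * (1 - c_const + s))) by (field; lra).
  assert (E3 : / (sqrt 2 * (1 - s) ^ 2) - / (sqrt 2 * (1 - 0) ^ 2)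
               = s * (2 - s) / (sqrt 2 * (1 - s) ^ 2)) by (field; lra).
  assert (s / 2 <= s / (2 * (1 - s))).
  { apply Rmult_le_compat_l; [lra|]; apply Rinv_le_contravar; nra. }
  assert (s / 2 <= s / (2 * (1 - c_const) * (1 - c_const + s))).
  { apply Rmult_le_compat_l; [lra|]; apply Rinv_le_contravar; nra. }
  assert (s <= s * (2 - s) / (sqrt 2 * (1 - s) ^ 2)).
  { assert (Hp : 0 < sqrt 2 * (1 - s) ^ 2) by (apply Rmult_lt_0_compat; [lra | apply pow_lt; lra]).
    apply Rmult_le_reg_r with (1 := Hp); unfold Rdiv; rewrite Rmult_assoc, Rinv_l by lra.
    assert (sqrt 2 * (1 - s) ^ 2 <= 2 - s) by (simpl; nra).
    nra. }
  lra.
Qed.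

Lemma f_mvt a b : 0 <= a -> a < b -> b <= c_const ->
  exists xi, a < xi < b /\ f_fun b - f_fun a = - f_slope xi * (b - a).
Proof.
  intros Ha Hab Hb.
  destruct (MVT_cor2 f_fun (fun y => - f_slope y) a b Hab) as [xi [E Hxi]].
  - intros y Hy; apply f_derivative; lra.
  - exists xi; auto.
Qed.

Lemma f_decreasing a b : 0 <= a -> a <= b -> b <= c_const -> f_fun b <= f_fun a.
Proof.
  intros Ha Hab Hb; destruct (Req_dec a b) as [<- | Hne]; [lra|].
  destruct (f_mvt a b Ha ltac:(lra) Hb) as [xi [Hxi E]].
  pose proof (f_slope_ge xi ltac:(lra)); nra.
Qed.

Lemma f_at_0 : f_fun 0 = 1.
Proof.
  pose proof sqrt2_bounds; pose proof (sqrt_sqrt 2 ltac:(lra)).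
  unfold f_fun, c_const; rewrite Rminus_0_r, ln_1, Rplus_0_r.
  field_simplify; try nra; replace (sqrt 2 ^ 2) with 2 by (simpl; lra); field; lra.
Qed.

Lemma f_at_c : f_fun c_const = 0.
Proof.
  pose proof sqrt2_bounds; pose proof (sqrt_sqrt 2 ltac:(lra)).
  unfold f_fun; replace (1 - c_const + c_const) with 1 by ring; rewrite ln_1.
  unfold c_const; field_simplify; try nra.
  replace (sqrt 2 ^ 3) with (2 * sqrt 2) by (simpl; nra).
  replace (sqrt 2 ^ 2) with 2 by (simpl; lra); unfold Rdiv; ring.
Qed.

Lemma f_range y : 0 <= y <= c_const -> 0 <= f_fun y <= 1.
Proof.
  intros Hy; pose proof c_bounds.
  pose proof (f_decreasing 0 y ltac:(lra) ltac:(lra) ltac:(lra)).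
  pose proof (f_decreasing y c_const ltac:(lra) ltac:(lra) ltac:(lra)).
  rewrite f_at_0, f_at_c in *; lra.
Qed.

Lemma f_inv_spec x : 0 <= x <= 1 -> 0 <= f_inv x <= c_const /\ f_fun (f_inv x) = x.
Proof.
  intros Hx; pose proof c_bounds; unfold f_inv; apply epsilon_spec.
  destruct (Req_dec x 1) as [-> | Hx1]; [exists 0; split; [lra | apply f_at_0]|].
  destruct (Req_dec x 0) as [-> | Hx0]; [exists c_const; split; [lra | apply f_at_c]|].
  destruct (Ranalysis5.IVT_interv (fun y => x - f_fun y) 0 c_const) as [z [Hz Ez]].
  - intros y Hy; apply continuity_pt_minus; [apply continuity_pt_const; now intros ? ?|].
    apply derivable_continuous_pt; exists (- f_slope y); apply f_derivative; lra.
  - lra.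
  - rewrite f_at_0; lra.
  - rewrite f_at_c; lra.
  - exists z; split; [auto | lra].
Qed.

Lemma f_gap_identity y : 0 <= y <= c_const ->
  1 - f_fun y + f_fun (c_const - y) = f_slope y * (1 - y).
Proof.
  intros Hy; pose proof sqrt2_bounds; pose proof (sqrt_sqrt 2 ltac:(lra)).
  unfold f_fun, f_slope.
  replace (1 - (c_const - y)) with (1 - c_const + y) by ring.
  replace (1 - c_const + (c_const - y)) with (1 - y) by ring.
  unfold c_const in *; field_simplify; try (repeat split; nra).
  replace (sqrt 2 ^ 2) with 2 by (simpl; lra); unfold Rdiv; ring.
Qed.

Lemma f_drop_le a b : 0 <= a -> a <= b -> b <= c_const ->
  f_fun a - f_fun b <= f_slope b * (b - a).
Proof.
  intros Ha Hab Hb; destruct (Req_dec a b) as [<- | Hne]; [nra|].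
  destruct (f_mvt a b Ha ltac:(lra) Hb) as [xi [Hxi E]].
  pose proof (f_slope_mono xi b ltac:(lra) ltac:(lra) Hb); nra.
Qed.

Lemma f_drop_ge_sq a b : 0 <= a -> a <= b -> b <= c_const ->
  (b - a) ^ 2 <= 2 * (f_fun a - f_fun b).
Proof.
  intros Ha Hab Hb; destruct (Req_dec a b) as [<- | Hne]; [nra|].
  set (mid := (a + b) / 2).
  destruct (f_mvt mid b ltac:(unfold mid; lra) ltac:(unfold mid; lra) Hb) as [xi [Hxi E]].
  pose proof (f_decreasing a mid Ha ltac:(unfold mid; lra) ltac:(unfold mid; lra)).
  pose proof (f_slope_ge xi ltac:(unfold mid in *; lra)).
  assert ((b - a) * (b - mid) <= f_slope xi * (b - mid))
    by (apply Rmult_le_compat_r; unfold mid in *; lra).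
  unfold mid in *; lra.
Qed.

Lemma ln_le_sub_1 x : 0 < x -> ln x <= x - 1.
Proof.
  intros Hx; destruct (Req_dec x 1) as [-> | Hx1]; [rewrite ln_1; lra|].
  assert (Hln : ln x <> 0)
    by (intros E; apply Hx1; rewrite <- (exp_ln x Hx), E, exp_0; reflexivity).
  pose proof (exp_ineq1 (ln x) Hln); rewrite exp_ln in * by exact Hx; lra.
Qed.

Lemma ln_sub_ge x z : 0 < x -> x <= z -> (z - x) / z <= ln z - ln x.
Proof.
  intros Hx Hxz.
  assert (E : (z - x) / z = - (x / z - 1)) by (field; lra).
  pose proof (ln_le_sub_1 (x / z) ltac:(apply Rdiv_lt_0_compat; lra)).
  rewrite E; rewrite ln_div in * by lra; lra.
Qed.

Lemma pow_exp n x : exp x ^ n = exp (INR n * x).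
Proof.
  induction n as [|n IH]; [simpl; rewrite Rmult_0_l, exp_0; reflexivity|].
  rewrite S_INR, <- tech_pow_Rmult, IH, <- exp_plus; f_equal; ring.
Qed.

Lemma ln_one_minus_c_bound : - ln (1 - c_const) < 0.92.
Proof.
  pose proof sqrt2_bounds; pose proof (sqrt_sqrt 2 ltac:(lra)).
  assert (E : 1 - c_const = / (1 + sqrt 2)).
  { apply Rmult_eq_reg_l with (1 + sqrt 2); [|lra].
    rewrite Rinv_r by lra; unfold c_const; nra. }
  rewrite E, ln_Rinv, Ropp_involutive by lra.
  assert (Hexp : 1.046 ^ 20 <= exp 0.92).
  { replace 0.92 with (INR 20 * 0.046) by (simpl; lra); rewrite <- pow_exp.
    apply pow_incr; pose proof (exp_ineq1 0.046 ltac:(lra)); lra. }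
  rewrite <- (ln_exp 0.92); apply ln_increasing; simpl in Hexp; lra.
Qed.

Definition potential (y : R) : R := ln (1 - y) - ln (1 - c_const) + 0.06 * (c_const - y).

Lemma potential_antimono y y' : 0 <= y' -> y' <= y -> y <= c_const -> potential y <= potential y'.
Proof.
  intros; pose proof c_bounds; unfold potential.
  assert (ln (1 - y) <= ln (1 - y')) by (apply ln_le; lra); lra.
Qed.

Lemma potential_nonneg y : 0 <= y <= c_const -> 0 <= potential y.
Proof.
  intros Hy; pose proof (potential_antimono c_const y ltac:(lra) ltac:(lra) ltac:(lra)) as Hc.
  unfold potential at 1 in Hc; lra.
Qed.

Lemma potential_le y : 0 <= y <= c_const -> potential y <= 0.96.
Proof.
  intros Hy; pose proof c_bounds; pose proof ln_one_minus_c_bound; unfold potential.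
  assert (ln (1 - y) <= 0) by (rewrite <- ln_1; apply ln_le; lra); lra.
Qed.

Lemma potential_step y y' nr : 0 <= y' -> y' < y -> y <= c_const ->
  (y - y') ^ 2 <= 0.000025 -> (1 - y) / (y - y') - 1 <= nr ->
  81 <= nr /\ potential y + / nr <= potential y'.
Proof.
  intros Hy' Hlt Hy HD Hnr; pose proof c_bounds.
  set (D := y - y') in *; set (a := 1 - y) in *.
  assert (HD5 : 0 < D <= 0.005) by (unfold D in *; nra).
  assert (Ha : 0.4142 <= a) by (unfold a; lra).
  assert (Hcount : 81 <= (a - D) / D).
  { apply Rmult_le_reg_r with D; [lra|]; unfold Rdiv; rewrite Rmult_assoc, Rinv_l; lra. }
  replace (a / D - 1) with ((a - D) / D) in Hnr by (field; lra).
  split; [lra|].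
  assert (Hinv : / nr <= D / (a - D)).
  { replace (D / (a - D)) with (/ ((a - D) / D)) by (field; lra).
    apply Rinv_le_contravar; lra. }
  assert (Hln : D / (a + D) <= ln (1 - y') - ln (1 - y)).
  { replace (D / (a + D)) with ((1 - y' - (1 - y)) / (1 - y')) by (unfold a, D; field; lra).
    apply ln_sub_ge; lra. }
  assert (Hdisc : D / (a - D) - D / (a + D) <= 0.06 * D).
  { replace (D / (a - D) - D / (a + D)) with (D * (2 * D / ((a - D) * (a + D))))
      by (field; lra).
    rewrite (Rmult_comm 0.06 D); apply Rmult_le_compat_l; [lra|].
    apply Rmult_le_reg_r with ((a - D) * (a + D)); [nra|].
    unfold Rdiv; rewrite Rmult_assoc, Rinv_l by nra; nra. }
  unfold potential; unfold a, D in *; lra.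
Qed.

Lemma floor_nat_spec r : 0 <= r -> r - 1 < INR (floor_nat r) <= r.
Proof.
  intros Hr; destruct (base_Int_part r) as [Hlo Hhi].
  assert (Hz : (-1 < Int_part r)%Z) by (apply lt_IZR; lra).
  unfold floor_nat; rewrite INR_IZR_INZ, Z2Nat.id by lia; lra.
Qed.

Definition grid (k i : nat) : R := f_inv (INR (i - 1) / INR k).

Lemma grid_spec k i : (1 <= k)%nat -> (1 <= i <= k + 1)%nat ->
  0 <= grid k i <= c_const /\ f_fun (grid k i) = INR (i - 1) / INR k.
Proof.
  intros Hk Hi; apply f_inv_spec.
  assert (0 < INR k) by (apply lt_0_INR; lia).
  assert (INR (i - 1) <= INR k) by (apply le_INR; lia).
  split; [apply Rdiv_le_0_compat; [apply pos_INR | lra]|].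
  apply Rmult_le_reg_r with (INR k); [lra|].
  unfold Rdiv; rewrite Rmult_assoc, Rinv_l; lra.
Qed.

Lemma grid_drop k i : (1 <= k)%nat -> (1 <= i <= k)%nat ->
  f_fun (grid k (i + 1)) - f_fun (grid k i) = / INR k.
Proof.
  intros Hk Hi; rewrite (proj2 (grid_spec k i Hk ltac:(lia))),
    (proj2 (grid_spec k (i + 1) Hk ltac:(lia))).
  replace (i + 1 - 1)%nat with (S (i - 1)) by lia; rewrite S_INR.
  field; apply not_0_INR; lia.
Qed.

Lemma grid_lt k i : (1 <= k)%nat -> (1 <= i <= k)%nat -> grid k (i + 1) < grid k i.
Proof.
  intros Hk Hi; pose proof (grid_drop k i Hk Hi).
  destruct (grid_spec k i Hk ltac:(lia)) as [Hy _].
  destruct (grid_spec k (i + 1) Hk ltac:(lia)) as [Hy' _].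
  pose proof (Rinv_0_lt_compat (INR k) ltac:(apply lt_0_INR; lia)).
  destruct (Rlt_or_le (grid k (i + 1)) (grid k i)) as [? | Hle]; [assumption|].
  pose proof (f_decreasing (grid k i) (grid k (i + 1)) ltac:(lra) Hle ltac:(lra)); lra.
Qed.

Lemma hcount_bounds k i : (1 <= k)%nat -> (1 <= i <= k)%nat ->
  INR k * f_fun (c_const - grid k i) - 1 < INR (hcount k i) /\ (hcount k i <= k)%nat.
Proof.
  intros Hk Hi; destruct (grid_spec k i Hk ltac:(lia)) as [Hy _].
  destruct (f_range (c_const - grid k i) ltac:(lra)) as [F0 F1].
  assert (0 < INR k) by (apply lt_0_INR; lia).
  destruct (floor_nat_spec (INR k * f_fun (c_const - grid k i)) ltac:(nra)) as [Hlo Hhi].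
  unfold hcount, h_fun; fold (grid k i); split; [lra|].
  apply INR_le; nra.
Qed.

(* The squared grid spacing, at most [2/k], must stay below the [2.5e-5] of [potential_step]. *)
Definition Kbig : nat := Nat.pow 2 17.

Lemma Kbig_le_INR k : (Kbig <= k)%nat -> 131072 <= INR k.
Proof.
  intros HK; apply le_INR in HK; unfold Kbig in HK; rewrite pow_INR in HK; simpl in HK; lra.
Qed.

Lemma Kbig_pos k : (Kbig <= k)%nat -> (1 <= k)%nat.
Proof. intros HK; pose proof (Kbig_le_INR k HK); apply INR_le; simpl; lra. Qed.

Lemma potential_gain k i n : (Kbig <= k)%nat -> (1 <= i <= k)%nat ->
  (k - i + 1 + hcount k i <= n)%nat ->
  potential (grid k i) + / INR n <= potential (grid k (i + 1)) /\
  1 < INR n * (1 - potential (grid k i)).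
Proof.
  intros HK Hi Hn; pose proof (Kbig_le_INR k HK) as Hk.
  pose proof (Kbig_pos k HK) as Hk1.
  destruct (grid_spec k i Hk1 ltac:(lia)) as [Hy Hfy].
  destruct (grid_spec k (i + 1) Hk1 ltac:(lia)) as [Hy' _].
  pose proof (grid_lt k i Hk1 Hi) as Hlt; pose proof (grid_drop k i Hk1 Hi) as Hdrop.
  pose proof (hcount_bounds k i Hk1 Hi) as [Hh _].
  pose proof (f_gap_identity (grid k i) Hy) as Hgap.
  set (y := grid k i) in *; set (y' := grid k (i + 1)) in *.
  pose proof (f_drop_le y' y ltac:(lra) ltac:(lra) ltac:(lra)) as Hslope.
  pose proof (f_drop_ge_sq y' y ltac:(lra) ltac:(lra) ltac:(lra)) as Hsq.
  apply le_INR in Hn; rewrite !plus_INR, minus_INR in Hn by lia; simpl INR in Hn.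
  assert (Hi1 : INR i = INR (i - 1) + 1)
    by (rewrite <- S_INR; f_equal; lia).
  assert (Hky : INR k * f_fun y = INR (i - 1)) by (rewrite Hfy; field; lra).
  assert (Hkd : INR k * / INR k = 1) by (field; lra).
  assert (Hcount : (1 - y) / (y - y') - 1 <= INR n).
  { apply Rle_trans with (INR k * (f_slope y * (1 - y)) - 1); [|rewrite <- Hgap; nra].
    apply Rplus_le_compat_r; apply Rmult_le_reg_r with (y - y'); [lra|].
    unfold Rdiv; rewrite Rmult_assoc, Rinv_l, Rmult_1_r by lra.
    assert (1 <= INR k * (f_slope y * (y - y'))) by (rewrite <- Hkd; nra).
    pose proof c_bounds; nra. }
  destruct (potential_step y y' (INR n) ltac:(lra) Hlt ltac:(lra) ltac:(nra) Hcount)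
    as [H81 Hstep].
  pose proof (potential_le y Hy); split; [exact Hstep | nra].
Qed.

Definition count {A : Type} (T : A -> bool) (l : list A) : nat := length (filter T l).

Lemma count_app {A : Type} (T : A -> bool) l1 l2 :
  count T (l1 ++ l2) = (count T l1 + count T l2)%nat.
Proof. unfold count; rewrite filter_app, length_app; reflexivity. Qed.

Lemma count_map {A B : Type} (T : B -> bool) (g : A -> B) l :
  count T (map g l) = count (fun x => T (g x)) l.
Proof. unfold count; rewrite filter_map_swap, length_map; reflexivity. Qed.

Lemma count_flat_map_ge {A B : Type} (T : B -> bool) (g : A -> list B) l x :
  In x l -> (count T (g x) <= count T (flat_map g l))%nat.
Proof.
  induction l as [|a l IH]; simpl; [tauto|]; rewrite count_app.
  intros [-> | Hx]; [lia | specialize (IH Hx); lia].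
Qed.

Section WaterFilling.

Context {V : Type} (eqdec : forall x y : V, {x = y} + {x <> y}).

Lemma inb_In v l : inb eqdec v l = true -> In v l.
Proof.
  induction l as [|a l IH]; simpl; [discriminate|].
  intros [Hva | Hl]%orb_true_iff; [destruct (eqdec v a); [left; congruence | discriminate]|].
  right; exact (IH Hl).
Qed.

Lemma open_nbrs_adj verts adj done u v :
  In v (open_nbrs eqdec verts adj done u) -> adj u v = true.
Proof. intros [_ [Hadj _]%andb_true_iff]%filter_In; exact Hadj. Qed.

Lemma count_filter (T P : V -> bool) (l : list V) :
  (forall v, In v l -> T v = true -> P v = true) -> count T (filter P l) = count T l.
Proof.
  unfold count; induction l as [|a l IH]; intros HTP; [reflexivity|]; simpl.
  specialize (IH (fun v Hv => HTP v (or_intror Hv))).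
  destruct (P a) eqn:Pa; simpl; destruct (T a) eqn:Ta; simpl; rewrite ?IH; try reflexivity.
  rewrite (HTP a (or_introl eq_refl) Ta) in Pa; discriminate.
Qed.

Lemma sumR_ge_count (T : V -> bool) (g : V -> R) (m0 : R) (l : list V) :
  (forall v, In v l -> 0 <= g v) -> (forall v, In v l -> T v = true -> m0 <= g v) ->
  INR (count T l) * m0 <= sumR (map g l).
Proof.
  unfold count, sumR; induction l as [|a l IH]; intros Hg HT; cbn [filter map fold_right].
  { simpl; lra. }
  specialize (IH (fun v Hv => Hg v (or_intror Hv)) (fun v Hv => HT v (or_intror Hv))).
  pose proof (Hg a (or_introl eq_refl)).
  destruct (T a) eqn:Ta; cbn [length]; [rewrite S_INR; pose proof (HT a (or_introl eq_refl) Ta)|];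
    lra.
Qed.

Lemma sumR_nonneg (g : V -> R) (l : list V) :
  (forall v, In v l -> 0 <= g v) -> 0 <= sumR (map g l).
Proof.
  intros Hg; pose proof (sumR_ge_count (fun _ => false) g 0 l Hg) as Hsum.
  rewrite Rmult_0_r in Hsum; apply Hsum; discriminate.
Qed.

Lemma continuous_sum_raise (L : V -> R) (N : list V) (z : R) :
  continuous (fun lvl => sumR (map (fun v => Rmax (L v) lvl - L v) N)) z.
Proof.
  induction N as [|a N IH]; simpl; [apply continuous_const|].
  apply (continuous_plus (fun lvl => Rmax (L a) lvl - L a)); [|exact IH].
  apply continuous_ext with (fun lvl => / 2 * ((lvl - L a) + Rabs (lvl - L a))).
  - intros lvl; unfold Rmax; destruct (Rle_dec (L a) lvl);
      [rewrite Rabs_right | rewrite Rabs_left]; lra.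
  - apply continuity_pt_filterlim.
    apply continuity_pt_mult; [apply continuity_pt_const; now intros ? ?|].
    apply continuity_pt_plus; [reg|].
    apply (continuity_pt_comp (fun lvl => lvl - L a) Rabs); [reg | apply Rcontinuity_abs].
Qed.

Lemma sum_raise_0 (L : V -> R) (N : list V) :
  (forall w, 0 <= L w) -> sumR (map (fun v => Rmax (L v) 0 - L v) N) = 0.
Proof.
  intros HL; unfold sumR; induction N as [|a N IH]; [reflexivity|]; simpl.
  rewrite IH, Rmax_left by apply HL; ring.
Qed.

Section StepExistence.

Variables (N : list V) (u : V) (L : V -> R).
Hypotheses (HL : forall w, 0 <= L w <= 1) (Hu : ~ In u N).

Let inflow (lvl : R) : R := sumR (map (fun v => Rmax (L v) lvl - L v) N).

Definition raise (lvl : R) : V -> R := fun w =>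
  if in_dec eqdec w N then Rmax (L w) lvl
  else if eqdec w u then L u + inflow lvl else L w.

Lemma raise_wf_step lvl : lvl <= 1 -> L u + inflow lvl <= 1 ->
  L u + inflow lvl = 1 \/ lvl = 1 -> wf_step N u L (raise lvl).
Proof.
  intros Hlvl Hin Hstop.
  assert (Hnbr : forall v, In v N -> raise lvl v = Rmax (L v) lvl)
    by (intros v Hv; unfold raise; destruct (in_dec eqdec v N); tauto).
  assert (Hself : raise lvl u = L u + inflow lvl).
  { unfold raise; destruct (in_dec eqdec u N); [tauto|]; destruct (eqdec u u); tauto. }
  exists lvl; repeat split; try assumption.
  - intros w Hwu HwN; unfold raise; destruct (in_dec eqdec w N); [tauto|].
    destruct (eqdec w u); tauto.
  - rewrite Hself; unfold inflow; f_equal; f_equal.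
    apply map_ext_in; intros v Hv; rewrite Hnbr by exact Hv; reflexivity.
  - rewrite Hself; assumption.
  - destruct Hstop as [Hfull | ->]; [left; rewrite Hself; exact Hfull|right].
    intros v Hv; rewrite Hnbr by exact Hv; apply Rmax_right, HL.
Qed.

Lemma wf_step_exists : exists L1, wf_step N u L L1.
Proof.
  destruct (Rle_dec (L u + inflow 1) 1) as [Hle | Hgt].
  { exists (raise 1); apply raise_wf_step; [lra | exact Hle | now right]. }
  assert (Hin0 : inflow 0 = 0) by (apply sum_raise_0; intros w; apply HL).
  destruct (IVT_gen_consistent inflow 0 1 (1 - L u) (continuous_sum_raise L N))
    as [lvl [Hlvl E]].
  { rewrite Hin0; pose proof (HL u); split.
    - apply Rle_trans with 0; [apply Rmin_l | lra].
    - apply Rle_trans with (inflow 1); [lra | apply Rmax_r]. }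
  exists (raise lvl); apply raise_wf_step; [|lra | left; lra].
  rewrite Rmax_right in Hlvl by lra; lra.
Qed.

End StepExistence.

Section StepFacts.

Context {N : list V} {u : V} {L L1 : V -> R}.
Hypotheses (HL : forall w, 0 <= L w <= 1) (Hstep : wf_step N u L L1).

Lemma wf_step_bounds w : 0 <= L1 w <= 1 /\ L w <= L1 w.
Proof.
  destruct Hstep as [lvl [Hlvl [Hnbr [Hframe [Hself [Hu1 _]]]]]].
  assert (Hnbr_bounds : forall v, In v N -> 0 <= L1 v <= 1 /\ L v <= L1 v).
  { intros v Hv; rewrite Hnbr by exact Hv; pose proof (HL v); pose proof (Rmax_l (L v) lvl).
    unfold Rmax; destruct (Rle_dec (L v) lvl); lra. }
  destruct (in_dec eqdec w N) as [Hw | Hw]; [now apply Hnbr_bounds|].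
  destruct (eqdec w u) as [-> | Hwu]; [|rewrite Hframe by assumption; pose proof (HL w); lra].
  assert (0 <= sumR (map (fun v => L1 v - L v) N))
    by (apply sumR_nonneg; intros v Hv; pose proof (Hnbr_bounds v Hv); lra).
  pose proof (HL u); lra.
Qed.

Lemma wf_step_frame w : w <> u -> ~ In w N -> L1 w = L w.
Proof. destruct Hstep as [lvl [_ [_ [Hframe _]]]]; apply Hframe. Qed.

Lemma wf_step_inflow_le : sumR (map (fun v => L1 v - L v) N) <= 1.
Proof.
  destruct Hstep as [lvl [_ [_ [_ [Hself [Hu1 _]]]]]]; pose proof (HL u); lra.
Qed.

Lemma wf_step_inflow_ge (T : V -> bool) (m0 : R) :
  (forall v, In v N -> T v = true -> m0 <= L1 v - L v) ->
  INR (count T N) * m0 <= sumR (map (fun v => L1 v - L v) N).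
Proof.
  intros HT; apply sumR_ge_count; [|exact HT].
  intros v _; pose proof (wf_step_bounds v); lra.
Qed.

Context {T : V -> bool} {p : R}.
Hypothesis HT : forall v, In v N -> T v = true -> L v <= p.

Lemma wf_step_nbr_le : 0 < INR (count T N) ->
  forall v, In v N -> L1 v <= Rmax (L v) (p + / INR (count T N)).
Proof.
  intros Hn v Hv; pose proof Hstep as [lvl [_ [Hnbr _]]].
  rewrite Hnbr by exact Hv; apply Rle_max_compat_l.
  destruct (Rle_dec lvl p) as [Hle | Hgt]; [pose proof (Rinv_0_lt_compat _ Hn); lra|].
  assert (Hsum : INR (count T N) * (lvl - p) <= 1).
  { eapply Rle_trans; [|apply wf_step_inflow_le]; apply wf_step_inflow_ge.
    intros w Hw HTw; rewrite Hnbr by exact Hw; pose proof (HT w Hw HTw).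
    pose proof (Rmax_r (L w) lvl); lra. }
  apply Rmult_le_reg_l with (INR (count T N)); [exact Hn|].
  rewrite Rmult_plus_distr_l, Rinv_r by lra; lra.
Qed.

Lemma wf_step_saturates : 1 < INR (count T N) * (1 - p) -> L1 u = 1.
Proof.
  intros Hmany; pose proof Hstep as [lvl [_ [_ [_ [_ [_ [Hfull | Hall]]]]]]]; [exact Hfull|].
  exfalso; assert (INR (count T N) * (1 - p) <= 1); [|lra].
  eapply Rle_trans; [|apply wf_step_inflow_le]; apply wf_step_inflow_ge.
  intros w Hw HTw; rewrite Hall by exact Hw; pose proof (HT w Hw HTw); lra.
Qed.

End StepFacts.

Section Runs.

Variables (verts : list V) (adj : V -> V -> bool) (L0 : V -> R).

Lemma wf_run_snoc done L l u L2 :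
  wf_run eqdec verts adj done L (l ++ [u]) L2 <->
  exists L1, wf_run eqdec verts adj done L l L1 /\
             wf_step (open_nbrs eqdec verts adj (rev l ++ done) u) u L1 L2.
Proof.
  revert done L; induction l as [|a l IH]; intros done L; simpl.
  - split.
    + intros Hrun; inversion Hrun as [|? ? ? ? L1 ? Hstep Hrest]; subst.
      inversion Hrest; subst; exists L; split; [constructor | exact Hstep].
    + intros [L1 [Hrun Hstep]]; inversion Hrun; subst.
      econstructor; [exact Hstep | constructor].
  - split.
    + intros Hrun; inversion Hrun as [|? ? ? ? L1 ? Hstep Hrest]; subst.
      apply IH in Hrest as [L3 [Hl Hu]]; exists L3; split; [econstructor; eauto|].
      rewrite <- app_assoc; exact Hu.
    + intros [L1 [Hrun Hstep]]; inversion Hrun as [|? ? ? ? L3 ? Hstep3 Hrest]; subst.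
      econstructor; [exact Hstep3|]; apply IH; exists L1; split; [exact Hrest|].
      rewrite <- app_assoc in Hstep; exact Hstep.
Qed.

Definition wf_reach (l : list V) (P : (V -> R) -> Prop) : Prop :=
  (exists L, wf_run eqdec verts adj [] L0 l L) /\
  (forall L, wf_run eqdec verts adj [] L0 l L -> P L).

Lemma wf_reach_nil (P : (V -> R) -> Prop) : P L0 -> wf_reach [] P.
Proof.
  intros HP; split; [exists L0; constructor|].
  intros L Hrun; inversion Hrun; subst; exact HP.
Qed.

Lemma wf_reach_weaken l (P Q : (V -> R) -> Prop) :
  (forall L, P L -> Q L) -> wf_reach l P -> wf_reach l Q.
Proof. intros HPQ [Hex HP]; split; [exact Hex | intros L Hrun; exact (HPQ L (HP L Hrun))]. Qed.

Lemma wf_reach_snoc l u (P Q : (V -> R) -> Prop) :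
  adj u u = false -> (forall L, P L -> forall w, 0 <= L w <= 1) ->
  (forall L L1, P L -> wf_step (open_nbrs eqdec verts adj (rev l) u) u L L1 -> Q L1) ->
  wf_reach l P -> wf_reach (l ++ [u]) Q.
Proof.
  intros Hirr Hrange HPQ [[L HL] HP].
  assert (Hu : forall done, ~ In u (open_nbrs eqdec verts adj done u)).
  { intros done Hin; apply filter_In in Hin as [_ Hadj]; rewrite Hirr in Hadj; discriminate. }
  split.
  - destruct (wf_step_exists _ u L (Hrange L (HP L HL)) (Hu (rev l))) as [L1 Hstep].
    exists L1; apply wf_run_snoc; exists L; rewrite app_nil_r; split; assumption.
  - intros L2 Hrun; apply wf_run_snoc in Hrun as [L1 [Hrun Hstep]].
    rewrite app_nil_r in Hstep; exact (HPQ L1 L2 (HP L1 Hrun) Hstep).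
Qed.

End Runs.
End WaterFilling.

Lemma In_G_verts k m v : In v (G_verts k m) ->
  match v with GU t j | GV t j => (1 <= t <= m)%nat /\ (1 <= j <= k)%nat end.
Proof.
  unfold G_verts; intros [Hv | Hv]%in_app_or; apply in_flat_map in Hv as [t [Ht Hv]];
    apply in_map_iff in Hv as [j [<- Hj]]; apply in_seq in Ht, Hj; lia.
Qed.

Lemma G_adj_irrefl k m v : G_adj k m v v = false.
Proof.
  unfold G_adj; destruct v as [t i | t j]; simpl; [|reflexivity].
  replace (t =? t + 1)%nat with false by (symmetry; apply Nat.eqb_neq; lia).
  rewrite !andb_false_r; reflexivity.
Qed.

Definition layer (w : gvert) : nat := match w with GU t _ => (t - 1)%nat | GV t _ => t end.

Lemma G_adj_layer k m t i v : G_adj k m (GU t i) v = true -> (layer v <= t)%nat.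
Proof.
  unfold G_adj; intros [H | H]%orb_true_iff; destruct v as [t' j | t' j]; simpl in H |- *;
    try discriminate; repeat (apply andb_true_iff in H as [H ?]);
    repeat match goal with h : (_ =? _)%nat = true |- _ => apply Nat.eqb_eq in h end; lia.
Qed.

Definition layer_nbr (k t i : nat) (v : gvert) : bool :=
  match v with
  | GU t' j => (t' =? t + 1)%nat && (j <=? hcount k i)%nat
  | GV t' j => (t' =? t)%nat && (i <=? j)%nat
  end.

Lemma layer_nbr_in_layer k t i v : layer_nbr k t i v = true -> layer v = t.
Proof.
  destruct v as [t' j | t' j]; simpl; intros [Ht%Nat.eqb_eq _]%andb_true_iff; lia.
Qed.

Lemma layer_nbr_adj k m t i v : (1 <= k)%nat -> (1 <= i <= k)%nat -> (1 <= t)%nat ->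
  (t + 1 <= m)%nat -> In v (G_verts k m) -> layer_nbr k t i v = true ->
  G_adj k m (GU t i) v = true.
Proof.
  intros Hk Hi Ht Htm Hv%In_G_verts Hfresh; pose proof (hcount_bounds k i Hk Hi) as [_ Hh].
  unfold G_adj; apply orb_true_iff; left; unfold G_edge_dir, idx_ok.
  destruct v as [t' j | t' j]; apply andb_true_iff in Hfresh as [Ht' Hj];
    apply Nat.eqb_eq in Ht'; apply Nat.leb_le in Hj;
    repeat (apply andb_true_iff; split); apply Nat.leb_le || apply Nat.eqb_eq; lia.
Qed.

Lemma count_seq_le h k : count (fun j => j <=? h)%nat (seq 1 k) = Nat.min h k.
Proof.
  induction k as [|k IH]; [cbn; lia|].
  rewrite seq_S, count_app, IH; unfold count; cbn [filter].
  destruct (Nat.leb_spec (1 + k) h); cbn [length]; lia.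
Qed.

Lemma count_seq_ge i k : (1 <= i)%nat ->
  count (fun j => i <=? j)%nat (seq 1 k) = (k + 1 - i)%nat.
Proof.
  intros Hi; induction k as [|k IH]; [unfold count; cbn [seq filter length]; lia|].
  rewrite seq_S, count_app, IH; unfold count; cbn [filter].
  destruct (Nat.leb_spec i (1 + k)); cbn [length]; lia.
Qed.

Lemma count_layer_nbr k m t i : (1 <= k)%nat -> (1 <= i <= k)%nat -> (1 <= t)%nat ->
  (t + 1 <= m)%nat -> (k - i + 1 + hcount k i <= count (layer_nbr k t i) (G_verts k m))%nat.
Proof.
  intros Hk Hi Ht Htm; pose proof (hcount_bounds k i Hk Hi) as [_ Hh].
  unfold G_verts; rewrite count_app.
  pose proof (count_flat_map_ge (layer_nbr k t i) (fun t0 => map (GU t0) (seq 1 k))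
                (seq 1 m) (t + 1)%nat ltac:(apply in_seq; lia)) as HU.
  pose proof (count_flat_map_ge (layer_nbr k t i) (fun t0 => map (GV t0) (seq 1 k))
                (seq 1 m) t ltac:(apply in_seq; lia)) as HV.
  cbv beta in HU, HV; rewrite count_map in HU, HV; simpl in HU, HV.
  rewrite Nat.eqb_refl in HU, HV; cbn [andb] in HU, HV.
  rewrite count_seq_le in HU; rewrite count_seq_ge in HV by lia; lia.
Qed.

Definition u_block (k : nat) (ts : list nat) : list gvert :=
  flat_map (fun t => map (GU t) (seq 1 k)) ts.

Definition v_block (k m : nat) : list gvert :=
  flat_map (fun t => map (GV t) (seq 1 k)) (seq 1 m).

Definition deadline_prefix (k t i : nat) : list gvert :=
  u_block k (seq 1 (t - 1)) ++ map (GU t) (seq 1 (i - 1)).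

Lemma deadline_prefix_snoc k t i : (1 <= i)%nat ->
  deadline_prefix k t (i + 1) = deadline_prefix k t i ++ [GU t i].
Proof.
  intros Hi; unfold deadline_prefix; rewrite <- app_assoc; f_equal.
  replace (i + 1 - 1)%nat with (S (i - 1)) by lia; rewrite seq_S, map_app.
  replace (1 + (i - 1))%nat with i by lia; reflexivity.
Qed.

Lemma deadline_prefix_next_layer k t : (1 <= t)%nat ->
  deadline_prefix k (t + 1) 1 = deadline_prefix k t (k + 1).
Proof.
  intros Ht; unfold deadline_prefix, u_block; cbn [seq map]; rewrite app_nil_r.
  replace (t + 1 - 1)%nat with (S (t - 1)) by lia; rewrite seq_S, flat_map_app; cbn [flat_map].
  replace (1 + (t - 1))%nat with t by lia; replace (k + 1 - 1)%nat with k by lia.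
  rewrite app_nil_r; reflexivity.
Qed.

Lemma deadline_prefix_layer_lt k t i w : (1 <= t)%nat ->
  In w (deadline_prefix k t i) -> (layer w < t)%nat.
Proof.
  unfold deadline_prefix, u_block; intros Ht [Hw | Hw]%in_app_or.
  - apply in_flat_map in Hw as [t' [Ht' Hw]]; apply in_map_iff in Hw as [j [<- _]].
    apply in_seq in Ht'; simpl; lia.
  - apply in_map_iff in Hw as [j [<- _]]; simpl; lia.
Qed.

Lemma seq_pivot s n x : (s <= x < s + n)%nat ->
  seq s n = seq s (x - s) ++ x :: seq (S x) (s + n - S x).
Proof.
  intros Hx; replace n with (x - s + S (s + n - S x))%nat at 1 by lia.
  rewrite seq_app; replace (s + (x - s))%nat with x by lia; reflexivity.
Qed.

Lemma G_deadlines_prefix k m t i pre post : (1 <= t <= m)%nat -> (1 <= i <= k)%nat ->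
  G_deadlines k m = pre ++ GU t i :: post -> pre = deadline_prefix k t i.
Proof.
  intros Ht Hi Hsplit.
  set (post' := map (GU t) (seq (S i) (k - i)) ++ u_block k (seq (S t) (m - t)) ++ v_block k m).
  assert (Hdl : G_deadlines k m = deadline_prefix k t i ++ GU t i :: post').
  { unfold G_deadlines, deadline_prefix, post', u_block, v_block.
    rewrite (seq_pivot 1 m t) at 1 by lia; rewrite flat_map_app; cbn [flat_map].
    rewrite (seq_pivot 1 k i) at 1 by lia; rewrite map_app; cbn [map].
    replace (1 + m - S t)%nat with (m - t)%nat by lia.
    replace (1 + k - S i)%nat with (k - i)%nat by lia.
    rewrite <- !app_assoc; reflexivity. }
  assert (Hdeadline_prefix : ~ In (GU t i) (deadline_prefix k t i)).
  { unfold deadline_prefix, u_block; intros [Hin | Hin]%in_app_or.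
    - apply in_flat_map in Hin as [t' [Ht' Hin]]; apply in_map_iff in Hin as [j [Heq _]].
      injection Heq as -> ->; apply in_seq in Ht'; lia.
    - apply in_map_iff in Hin as [j [Heq Hj]]; injection Heq as ->; apply in_seq in Hj; lia. }
  assert (Hpost : ~ In (GU t i) post').
  { unfold post', u_block, v_block; intros [Hin | [Hin | Hin]%in_app_or]%in_app_or.
    - apply in_map_iff in Hin as [j [Heq Hj]]; injection Heq as ->; apply in_seq in Hj; lia.
    - apply in_flat_map in Hin as [t' [Ht' Hin]]; apply in_map_iff in Hin as [j [Heq _]].
      injection Heq as -> ->; apply in_seq in Ht'; lia.
    - apply in_flat_map in Hin as [t' [_ Hin]]; apply in_map_iff in Hin as [j [Heq _]].
      discriminate. }
  rewrite Hdl in Hsplit; apply app_inj_pivot in Hsplit as [[[Hin _] | [Hin _]] | [<- _]]; tauto.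
Qed.

Lemma count_layer_open_nbrs k m t i : (1 <= k)%nat -> (1 <= i <= k)%nat -> (1 <= t)%nat ->
  (t + 1 <= m)%nat ->
  (k - i + 1 + hcount k i <= count (layer_nbr k t i)
     (open_nbrs gvert_eqdec (G_verts k m) (G_adj k m) (rev (deadline_prefix k t i)) (GU t i)))%nat.
Proof.
  intros Hk Hi Ht Htm; unfold open_nbrs; rewrite count_filter; [now apply count_layer_nbr|].
  intros v Hv Hfresh; apply andb_true_iff; split; [now apply layer_nbr_adj|].
  apply negb_true_iff; destruct (inb gvert_eqdec v _) eqn:Hdone; [exfalso|reflexivity].
  apply inb_In, in_rev, (deadline_prefix_layer_lt k t i v Ht) in Hdone.
  rewrite (layer_nbr_in_layer k t i v Hfresh) in Hdone; lia.
Qed.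

Definition wf_inv (k t i : nat) (L : gvert -> R) : Prop :=
  (forall w, 0 <= L w <= 1) /\
  (forall w, layer w = t -> L w <= potential (grid k i)) /\
  (forall w, (t < layer w)%nat -> L w = 0).

Lemma wf_inv_step k m t i L L1 : (Kbig <= k)%nat -> (1 <= i <= k)%nat -> (1 <= t)%nat ->
  (t + 1 <= m)%nat -> wf_inv k t i L ->
  wf_step (open_nbrs gvert_eqdec (G_verts k m) (G_adj k m) (rev (deadline_prefix k t i)) (GU t i))
    (GU t i) L L1 ->
  wf_inv k t (i + 1) L1 /\ L1 (GU t i) = 1.
Proof.
  intros HK Hi Ht Htm [Hrange [Hlayer Hzero]] Hstep.
  pose proof (Kbig_pos k HK) as Hk.
  set (N := open_nbrs _ _ _ _ _) in Hstep.
  pose proof (count_layer_open_nbrs k m t i Hk Hi Ht Htm) as Hn; fold N in Hn.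
  set (n := count (layer_nbr k t i) N) in Hn.
  destruct (potential_gain k i n HK Hi Hn) as [Hgain Hmany].
  assert (Hnpos : 0 < INR n) by (apply lt_0_INR; lia).
  assert (Hfresh : forall v, In v N -> layer_nbr k t i v = true -> L v <= potential (grid k i))
    by (intros v _ Hv; apply Hlayer, (layer_nbr_in_layer k t i v Hv)).
  assert (Hnbr_layer : forall w, In w N -> (layer w <= t)%nat)
    by (intros w Hw; apply open_nbrs_adj, G_adj_layer in Hw; exact Hw).
  pose proof (Rinv_0_lt_compat _ Hnpos).
  split; [split; [|split]|].
  - intros w; apply (wf_step_bounds gvert_eqdec Hrange Hstep).
  - intros w Hw; destruct (in_dec gvert_eqdec w N) as [HwN | HwN].
    + eapply Rle_trans; [exact (wf_step_nbr_le gvert_eqdec Hrange Hstep Hfresh Hnpos w HwN)|].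
      apply Rmax_lub; fold n; [pose proof (Hlayer w Hw)|]; lra.
    + destruct (gvert_eqdec w (GU t i)) as [-> | Hwu]; [simpl in Hw; lia|].
      rewrite (wf_step_frame Hstep w Hwu HwN); pose proof (Hlayer w Hw); lra.
  - intros w Hw; destruct (in_dec gvert_eqdec w N) as [HwN | HwN];
      [apply Hnbr_layer in HwN; lia|].
    destruct (gvert_eqdec w (GU t i)) as [-> | Hwu]; [simpl in Hw; lia|].
    rewrite (wf_step_frame Hstep w Hwu HwN); exact (Hzero w Hw).
  - exact (wf_step_saturates gvert_eqdec Hrange Hstep Hfresh Hmany).
Qed.

Lemma wf_inv_start k : (1 <= k)%nat -> wf_inv k 1 1 (fun _ => 0).
Proof.
  intros Hk; pose proof (proj1 (grid_spec k 1 Hk ltac:(lia))) as Hy.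
  repeat split; intros; try lra; apply potential_nonneg, Hy.
Qed.

Lemma wf_inv_next_layer k t L : (1 <= k)%nat -> wf_inv k t (k + 1) L -> wf_inv k (t + 1) 1 L.
Proof.
  intros Hk [Hrange [_ Hzero]]; pose proof (proj1 (grid_spec k 1 Hk ltac:(lia))) as Hy.
  repeat split; [apply Hrange | apply Hrange | |].
  - intros w Hw; rewrite Hzero by lia; apply potential_nonneg, Hy.
  - intros w Hw; apply Hzero; lia.
Qed.

Lemma reach_wf_inv_snoc k m t i : (Kbig <= k)%nat -> (1 <= i <= k)%nat -> (1 <= t)%nat ->
  (t + 1 <= m)%nat ->
  wf_reach gvert_eqdec (G_verts k m) (G_adj k m) (fun _ => 0)
    (deadline_prefix k t i) (wf_inv k t i) ->
  wf_reach gvert_eqdec (G_verts k m) (G_adj k m) (fun _ => 0)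
    (deadline_prefix k t i ++ [GU t i]) (fun L => wf_inv k t (i + 1) L /\ L (GU t i) = 1).
Proof.
  intros HK Hi Ht Htm; apply wf_reach_snoc; [apply G_adj_irrefl | now intros L [Hrange _] |].
  intros L L1 Hinv Hstep; exact (wf_inv_step k m t i L L1 HK Hi Ht Htm Hinv Hstep).
Qed.

Lemma reach_wf_inv k m t i : (Kbig <= k)%nat -> (1 <= t)%nat -> (t + 1 <= m)%nat ->
  (1 <= i <= k + 1)%nat ->
  wf_reach gvert_eqdec (G_verts k m) (G_adj k m) (fun _ => 0)
    (deadline_prefix k t i) (wf_inv k t i).
Proof.
  intros HK; pose proof (Kbig_pos k HK) as Hk.
  revert i; induction t as [|t IHt]; intros i Ht Htm Hi; [lia|].
  induction i as [|i IHi]; [lia|].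
  destruct i as [|i].
  - destruct t as [|t].
    + apply wf_reach_nil, wf_inv_start, Hk.
    + replace (S (S t)) with (S t + 1)%nat by lia; rewrite deadline_prefix_next_layer by lia.
      eapply wf_reach_weaken; [intros L; apply wf_inv_next_layer, Hk | apply IHt; lia].
  - replace (S (S i)) with (S i + 1)%nat by lia; rewrite deadline_prefix_snoc by lia.
    pose proof (reach_wf_inv_snoc k m (S t) (S i) HK ltac:(lia) Ht Htm (IHi ltac:(lia))) as Hreach.
    refine (wf_reach_weaken _ _ _ _ _ _ _ _ Hreach); intros L [Hinv _]; exact Hinv.
Qed.

Theorem corollary3p4 :
  exists K : nat, forall k m : nat, (K <= k)%nat ->
  forall t i : nat, (1 <= t <= m - 1)%nat -> (1 <= i <= k)%nat ->
  forall pre post : list gvert,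
    G_deadlines k m = pre ++ GU t i :: post ->
    (exists L, wf_run gvert_eqdec (G_verts k m) (G_adj k m) []
                 (fun _ => 0) (pre ++ [GU t i]) L) /\
    (forall L, wf_run gvert_eqdec (G_verts k m) (G_adj k m) []
                 (fun _ => 0) (pre ++ [GU t i]) L ->
               L (GU t i) = 1).
Proof.
  exists Kbig; intros k m HK t i Ht Hi pre post Hsplit.
  rewrite (G_deadlines_prefix k m t i pre post ltac:(lia) Hi Hsplit).
  pose proof (reach_wf_inv k m t i HK ltac:(lia) ltac:(lia) ltac:(lia)) as Hinv.
  pose proof (reach_wf_inv_snoc k m t i HK Hi ltac:(lia) ltac:(lia) Hinv) as Hreach.
  refine (wf_reach_weaken _ _ _ _ _ _ _ _ Hreach); intros L [_ Hfull]; exact Hfull.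
Qed.
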